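(* Let $(G,M,\Delta)$ be a Garside structure and $(H,N,\delta)$ a parabolic substructure. Put $\omega=\delta^{-1}\Delta$, $\Phi(\alpha)=\Delta\alpha\Delta^{-1}$ for $\alpha\in G$ and $\varphi(\beta)=\delta\beta\delta^{-1}$ for $\beta\in H$. Let $b\in N$. Then $b\wedge_L\omega=1$ and $b\vee_L\omega=b\omega=\omega b'$, where $b'=(\Phi^{-1}\circ\varphi)(b)$.
   Context: Let $G$ be a group and $M$ a submonoid with $M\cap M^{-1}=\{1\}$. Define $\alpha\le_L\beta$ iff $\alpha^{-1}\beta\in M$, and $\alpha\le_R\beta$ iff $\beta\alpha^{-1}\in M$. For $a\in M$ let $\mathrm{Div}_L(a)=\{b\in M: b\le_L a\}$, $\mathrm{Div}_R(a)=\{b\in M: b\le_R a\}$; $a$ is balanced if these coincide, and then $\mathrm{Div}(a)$ denotes this set. $M$ is Noetherian if each $a\in M$ admits an $n$ such that $a$ is not a product of more than $n$ non-trivial factors. A Garside structure $(G,M,\Delta)$: $\Delta\in M$ balanced, $M$ Noetherian, $\mathrm{Div}(\Delta)$ finite and generating $M$ as a monoid and $G$ as a group, $(G,\le_L)$ a lattice with meet $\wedge_L$ and join $\vee_L$. A parabolic substructure $(H,N,\delta)$: $\delta\in M$ balanced, $H$ (resp. $N$) the subgroup (resp. submonoid) generated by $\mathrm{Div}(\delta)$, and $\mathrm{Div}(\delta)=\mathrm{Div}(\Delta)\cap N$; it is assumed $H\neq\{1\}$. *)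

From HB Require Import structures.
From mathcomp Require Import ssreflect ssrfun ssrbool eqtype ssrnat seq choice monoid.
Set Implicit Arguments.
Unset Strict Implicit.
Unset Printing Implicit Defensive.
Local Open Scope group_scope.

Section Garside.
Variable G : groupType.
Implicit Types (M S : G -> Prop) (a b c x : G).

Definition seqprod (s : seq G) : G := foldr (fun x y => x * y) 1 s.

Definition pointed_submonoid M : Prop :=
  [/\ M 1, (forall x y, M x -> M y -> M (x * y)) &
      (forall x, M x -> M x^-1 -> x = 1)].

Definition leL M a b : Prop := M (a^-1 * b).
Definition leR M a b : Prop := M (b * a^-1).

Definition DivL M a : G -> Prop := fun b => M b /\ leL M b a.
Definition DivR M a : G -> Prop := fun b => M b /\ leR M b a.

Definition balanced M a : Prop := M a /\ forall b, DivL M a b <-> DivR M a b.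

(* Div(a) (meaningful when a is balanced) *)
Definition Div M a : G -> Prop := DivL M a.

Definition monoid_gen S : G -> Prop :=
  fun x => exists s : seq G, (forall y, y \in s -> S y) /\ x = seqprod s.

Definition group_gen S : G -> Prop :=
  monoid_gen (fun y => S y \/ S y^-1).

Definition noetherian M : Prop :=
  forall a, M a -> exists n : nat, forall s : seq G,
    (forall y, y \in s -> M y /\ y <> 1) -> seqprod s = a -> size s <= n.

Definition finite_set S : Prop :=
  exists s : seq G, forall x, S x -> x \in s.

Definition is_meetL M a b m : Prop :=
  [/\ leL M m a, leL M m b & forall c, leL M c a -> leL M c b -> leL M c m].
Definition is_joinL M a b j : Prop :=
  [/\ leL M a j, leL M b j & forall c, leL M a c -> leL M b c -> leL M j c].

Definition lattice_L M : Prop :=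
  forall a b, (exists m, is_meetL M a b m) /\ (exists j, is_joinL M a b j).

Definition garside_structure M (Delta : G) : Prop :=
  pointed_submonoid M /\
  balanced M Delta /\
  noetherian M /\
  finite_set (Div M Delta) /\
  (forall x, M x <-> monoid_gen (Div M Delta) x) /\
  (forall x, group_gen (Div M Delta) x) /\
  lattice_L M.

(* parabolic substructure (H, N, δ) of (G, M, Δ), with
   H = group_gen (Div M δ), N = monoid_gen (Div M δ), and H ≠ {1} *)
Definition parabolic_substructure M (Delta delta : G) : Prop :=
  [/\ balanced M delta,
      (forall x, Div M delta x <->
                 (Div M Delta x /\ monoid_gen (Div M delta) x)) &
      exists h, group_gen (Div M delta) h /\ h <> 1].

End Garside.

From HB Require Import structures.
From mathcomp Require Import ssreflect ssrfun ssrbool eqtype ssrnat seq choice monoid.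

(* The key fact is that N is closed under left and right divisors taken in M.
   Every element of N left-divides a power delta^k, and conversely every x in M
   below delta^k lies in N: by Noetherian induction, peel off a nontrivial
   simple first factor s of x; s lies below both delta^k and Delta, hence below
   delta (induction on k, using the join of s and delta), so s is in Div(delta).
   Then the meet m of b and omega lies in N with delta m dividing Delta, which
   puts delta m in Div(delta) and forces m = 1.  For the join j = b y, the
   element u = Delta (delta y)^-1 of M is a right divisor of phi(b), hence in N,
   and u delta lies in Div(delta) = Div_R(delta), which forces u = 1, i.e.
   j = b omega. *)

Set Implicit Arguments.
Unset Strict Implicit.
Unset Printing Implicit Defensive.
Local Open Scope group_scope.

Section MonoidGen.
Variables (G : groupType) (S : G -> Prop).

Lemma seqprod_cat (s1 s2 : seq G) : seqprod (s1 ++ s2) = seqprod s1 * seqprod s2.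
Proof. by elim: s1 => [|x s IH] /=; rewrite ?mul1g // IH mulgA. Qed.

Lemma monoid_gen1 : monoid_gen S 1.
Proof. by exists [::]. Qed.

Lemma monoid_gen_mem x : S x -> monoid_gen S x.
Proof.
by move=> Sx; exists [:: x]; split=> [y|]; rewrite /= ?inE ?mulg1 // => /eqP ->.
Qed.

Lemma monoid_genM x y : monoid_gen S x -> monoid_gen S y -> monoid_gen S (x * y).
Proof.
move=> [s1 [S1 ->]] [s2 [S2 ->]]; exists (s1 ++ s2); rewrite seqprod_cat.
by split=> // z; rewrite mem_cat => /orP[/S1|/S2].
Qed.

Lemma monoid_gen_ind (P : G -> Prop) :
  P 1 -> (forall s x, S s -> monoid_gen S x -> P x -> P (s * x)) ->
  forall x, monoid_gen S x -> P x.
Proof.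
move=> P1 PM x [l [Sl ->]]; elim: l Sl => [|s l IH] Sl //=.
have Sl' y : y \in l -> S y by move=> yl; apply: Sl; rewrite inE yl orbT.
by apply: PM; [apply: Sl; rewrite inE eqxx | exists l | apply: IH].
Qed.

Lemma monoid_gen_conj c :
  (forall s, S s -> S (s ^ c)) -> forall x, monoid_gen S x -> monoid_gen S (x ^ c).
Proof.
move=> Sc; apply: monoid_gen_ind => [|s x Ss _ IH].
  by rewrite conj1g; apply: monoid_gen1.
by rewrite conjMg; apply: monoid_genM => //; apply/monoid_gen_mem/Sc.
Qed.

Lemma monoid_gen_first_factor x : monoid_gen S x -> x <> 1 ->
  exists s y, [/\ S s, s <> 1, monoid_gen S y & x = s * y].
Proof.
elim/monoid_gen_ind => // s y Ss Sy IH.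
case: (eqVneq s 1) => [-> | /eqP s_neq1]; first by rewrite mul1g.
by move=> _; exists s, y.
Qed.

End MonoidGen.

Definition factor_bound (G : groupType) (M : G -> Prop) (n : nat) (x : G) : Prop :=
  forall s : seq G, (forall y, y \in s -> M y /\ y <> 1) -> seqprod s = x -> size s <= n.

Section Submonoid.
Variables (G : groupType) (M : G -> Prop).
Hypothesis M_pointed : pointed_submonoid M.

Lemma M1 : M 1.
Proof. by case: M_pointed. Qed.

Lemma MM x y : M x -> M y -> M (x * y).
Proof. by case: M_pointed => _ + _; apply. Qed.

Lemma M_eq1 x : M x -> M x^-1 -> x = 1.
Proof. by case: M_pointed => _ _; apply. Qed.

Lemma M_eq x y : M x -> x = y -> M y.
Proof. by move=> Mx <-. Qed.

Lemma leL_trans a b c : leL M a b -> leL M b c -> leL M a c.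
Proof. by move=> ab bc; rewrite /leL; apply: M_eq (MM ab bc) _; rewrite ?gnorm. Qed.

Lemma factor_bound0 x : M x -> factor_bound M 0 x -> x = 1.
Proof.
move=> Mx bx; case: (eqVneq x 1) => // /eqP x_neq1.
suff : size [:: x] <= 0 by [].
by apply: bx => [y | /=]; rewrite ?inE ?mulg1 // => /eqP ->.
Qed.

Lemma factor_boundMl n s x :
  M s -> s <> 1 -> factor_bound M n.+1 (s * x) -> factor_bound M n x.
Proof.
move=> Ms s_neq1 bsx l Ml lx; apply: (bsx (s :: l)) => [y | /=]; last by rewrite lx.
by rewrite inE => /orP[/eqP -> | /Ml].
Qed.

Lemma monoid_gen_Div_M d x : monoid_gen (Div M d) x -> M x.
Proof. by elim/monoid_gen_ind => [|s y [Ms _] _ My]; [apply: M1 | apply: MM]. Qed.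

Section Balanced.
Variable d : G.
Hypothesis d_balanced : balanced M d.

Lemma DivLR s : DivL M d s <-> DivR M d s.
Proof. exact: d_balanced.2. Qed.

Lemma Div_self : Div M d d.
Proof. by case: d_balanced => Md _; split; rewrite // /leL mulVg; apply: M1. Qed.

Lemma Div_conj s : Div M d s -> Div M d (s ^ d).
Proof.
move=> [Ms sd]; rewrite conjgE.
have [_ Msd] : DivL M d (s^-1 * d).
  by apply/DivLR; split=> //; rewrite /leR; apply: M_eq Ms _; rewrite ?gnorm.
apply/DivLR; split; first by apply: M_eq Msd _; rewrite ?gnorm.
by rewrite /leR; apply: M_eq sd _; rewrite ?gnorm.
Qed.

Lemma Div_conjV s : Div M d s -> Div M d (s ^ d^-1).
Proof.
move=> Ds; have [_ ds] : DivR M d s by apply/DivLR.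
have [Ms _] := Ds.
have [_ Mdsd] : DivR M d (d * s^-1).
  by apply/DivLR; split=> //; rewrite /leL; apply: M_eq Ms _; rewrite ?gnorm.
rewrite conjgE invgK; split; first by apply: M_eq Mdsd _; rewrite ?gnorm.
by rewrite /leL; apply: M_eq ds _; rewrite ?gnorm.
Qed.

Lemma Div_compl s : Div M d s -> Div M d (s^-1 * d).
Proof.
move=> Ds; have [Msd _] := Div_conj Ds; have [_ sd] := Ds.
by split=> //; rewrite /leL; apply: M_eq Msd _; rewrite conjgE ?gnorm.
Qed.

Lemma monoid_gen_Div_conjX k x :
  monoid_gen (Div M d) x -> monoid_gen (Div M d) (x ^ d ^+ k).
Proof.
elim: k x => [|k IH] x Dx; first by rewrite conjg1.
by rewrite expgS conjgM; apply/IH/monoid_gen_conj => //; apply: Div_conj.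
Qed.

Lemma monoid_gen_Div_conjV x :
  monoid_gen (Div M d) x -> monoid_gen (Div M d) (x ^ d^-1).
Proof. by apply: monoid_gen_conj; apply: Div_conjV. Qed.

End Balanced.
End Submonoid.

Section Parabolic.
Variables (G : groupType) (M : G -> Prop) (Delta delta : G).
Hypothesis M_pointed : pointed_submonoid M.
Hypothesis Delta_balanced : balanced M Delta.
Hypothesis M_noetherian : noetherian M.
Hypothesis M_gen : forall x, M x -> monoid_gen (Div M Delta) x.
Hypothesis M_lattice : lattice_L M.
Hypothesis delta_balanced : balanced M delta.
Hypothesis Div_delta :
  forall x, Div M delta x <-> Div M Delta x /\ monoid_gen (Div M delta) x.

Local Notation N := (monoid_gen (Div M delta)).
Local Notation omega := (delta^-1 * Delta).

Lemma N_M x : N x -> M x.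
Proof. exact: monoid_gen_Div_M. Qed.

Lemma N_delta : N delta.
Proof. exact/monoid_gen_mem/(Div_self M_pointed delta_balanced). Qed.

Lemma delta_Div_Delta : Div M Delta delta.
Proof. by have /Div_delta[] := Div_self M_pointed delta_balanced. Qed.

Lemma omega_Div_Delta : Div M Delta omega.
Proof.
have [Md dD] := delta_Div_Delta; apply/(DivLR Delta_balanced).
by split; [exact: dD | rewrite /leR; apply: M_eq Md _; rewrite ?gnorm].
Qed.

Lemma M_conj_Delta x : M x -> M (x ^ Delta).
Proof.
move=> /M_gen Mx; apply: (monoid_gen_Div_M M_pointed).
by apply: monoid_gen_conj Mx => s; apply: Div_conj.
Qed.

Lemma M_conjV_Delta x : M x -> M (x ^ Delta^-1).
Proof.
move=> /M_gen Mx; apply: (monoid_gen_Div_M M_pointed).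
exact: monoid_gen_Div_conjV.
Qed.

Lemma N_Div_delta x : N x -> leL M x Delta -> Div M delta x.
Proof. by move=> Nx xD; apply/Div_delta; split=> //; split=> //; apply: N_M. Qed.

Lemma N_leL_deltaX a : N a -> exists k, leL M a (delta ^+ k).
Proof.
elim/monoid_gen_ind => [|s x Ds _ [k xk]].
  by exists 0; rewrite /leL expg0 mulVg; apply: (M1 M_pointed).
have /N_M Mc := monoid_gen_Div_conjX delta_balanced k
  (monoid_gen_mem (Div_compl delta_balanced Ds)).
exists k.+1; rewrite /leL expgS.
by apply: M_eq (MM M_pointed xk Mc) _; rewrite conjgE ?gnorm.
Qed.

Lemma leL_delta_of_leL_deltaX k s :
  M s -> leL M s (delta ^+ k) -> leL M s Delta -> leL M s delta.
Proof.
have [Md _] := delta_Div_Delta; have [_ oD] := omega_Div_Delta.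
have MdX n : M (delta ^+ n).
  by elim: n => [|n IHn]; [apply: M1 | rewrite expgS; apply: MM].
elim: k s => [|k IH] s Ms sk sD.
  by rewrite /leL; apply: M_eq (MM M_pointed sk Md) _; rewrite expg0 ?gnorm.
have [_ [r [sr dr r_min]]] := M_lattice s delta.
have rk : leL M r (delta ^+ k.+1).
  by apply: r_min => //; rewrite /leL expgS; apply: M_eq (MdX k) _; rewrite ?gnorm.
have rD : leL M r Delta by apply: r_min => //; case: delta_Div_Delta.
have r'_delta : leL M (delta^-1 * r) delta.
  apply: IH dr _ _; first by rewrite /leL; apply: M_eq (rk : M _) _; rewrite expgS ?gnorm.
  apply: (leL_trans M_pointed _ oD).
  by rewrite /leL; apply: M_eq (rD : M _) _; rewrite ?gnorm.
have Nr : N r.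
  rewrite -(mulVKg delta r); apply: monoid_genM N_delta _.
  exact: monoid_gen_mem.
have [_ rd] := N_Div_delta Nr rD.
exact: (leL_trans M_pointed sr rd).
Qed.

Lemma N_of_leL_deltaX k x : M x -> leL M x (delta ^+ k) -> N x.
Proof.
move=> Mx; have [n] := M_noetherian Mx; elim: n x Mx => [|n IHn] x Mx bx xk.
  by rewrite (factor_bound0 Mx bx); apply: monoid_gen1.
case: (eqVneq x 1) => [-> | /eqP x_neq1]; first exact: monoid_gen1.
have [s [y [Ds s_neq1 Dy xE]]] := monoid_gen_first_factor (M_gen Mx) x_neq1.
rewrite xE in bx xk *; have [Ms sD] := Ds; have My := monoid_gen_Div_M M_pointed Dy.
have Dds : Div M delta s.
  split=> //; apply: leL_delta_of_leL_deltaX Ms _ sD.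
  by apply: (leL_trans M_pointed _ xk); rewrite /leL; apply: M_eq My _; rewrite ?gnorm.
have /N_M Msk := monoid_gen_Div_conjX delta_balanced k (monoid_gen_mem Dds).
apply: monoid_genM (monoid_gen_mem Dds) (IHn y My (factor_boundMl Ms s_neq1 bx) _).
by rewrite /leL; apply: M_eq (MM M_pointed xk Msk) _; rewrite conjgE ?gnorm.
Qed.

Lemma N_ldiv_closed x a : M x -> leL M x a -> N a -> N x.
Proof.
move=> Mx xa /N_leL_deltaX[k ak].
exact: N_of_leL_deltaX Mx (leL_trans M_pointed xa ak).
Qed.

Lemma N_rdiv_closed g x : M g -> M x -> N (g * x) -> N x.
Proof.
move=> Mg Mx Ngx; have [k gxk] := N_leL_deltaX Ngx.
have Ng : N g.
  by apply: N_ldiv_closed Mg _ Ngx; rewrite /leL; apply: M_eq Mx _; rewrite ?gnorm.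
have /N_M Mgk := monoid_gen_Div_conjX delta_balanced k Ng.
apply: (N_of_leL_deltaX (k := k)) Mx _.
by rewrite /leL; apply: M_eq (MM M_pointed gxk Mgk) _; rewrite conjgE ?gnorm.
Qed.

Lemma eq1_delta_mul_leL_Delta m : N m -> leL M (delta * m) Delta -> m = 1.
Proof.
move=> Nm dmD; have [_ dm_delta] := N_Div_delta (monoid_genM N_delta Nm) dmD.
by apply: (M_eq1 M_pointed (N_M Nm)); apply: M_eq (dm_delta : M _) _; rewrite ?gnorm.
Qed.

Lemma eq1_mul_delta_leL_Delta u : N u -> leL M (u * delta) Delta -> u = 1.
Proof.
move=> Nu udD; have := N_Div_delta (monoid_genM Nu N_delta) udD.
move=> /(DivLR delta_balanced)[_ ud_delta].
by apply: (M_eq1 M_pointed (N_M Nu)); apply: M_eq (ud_delta : M _) _; rewrite ?gnorm.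
Qed.

Lemma meet_omega b m : N b -> is_meetL M b omega m -> m = 1.
Proof.
move=> Nb [mb mo m_max]; have [Mo _] := omega_Div_Delta.
have Mm : M m.
  by have := m_max 1; rewrite /leL !invg1 !mul1g; apply=> //; apply: N_M.
apply: eq1_delta_mul_leL_Delta; first exact: N_ldiv_closed Mm mb Nb.
by rewrite /leL; apply: M_eq (mo : M _) _; rewrite ?gnorm.
Qed.

Lemma omega_leL_mul b : N b -> leL M omega (b * omega).
Proof.
move=> Nb; have /N_M/M_conj_Delta Mb' := monoid_gen_Div_conjV delta_balanced Nb.
by rewrite /leL; apply: M_eq Mb' _; rewrite !conjgE ?gnorm.
Qed.

Lemma join_omega b j : N b -> is_joinL M b omega j -> j = b * omega.
Proof.
move=> Nb [bj oj j_min]; have [Mo _] := omega_Div_Delta; have [Md _] := delta_Div_Delta.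
have j_le : leL M j (b * omega).
  by apply: j_min (omega_leL_mul Nb); rewrite /leL; apply: M_eq Mo _; rewrite ?gnorm.
pose y := b^-1 * j; pose u := Delta * (delta * y)^-1.
have [_ Mu] : DivR M Delta (delta * y).
  apply/(DivLR Delta_balanced); split; first exact: (MM M_pointed Md bj).
  by rewrite /leL; apply: M_eq (j_le : M _) _; rewrite /y ?gnorm.
have Nu : N u.
  have Mg : M (delta * j * Delta^-1).
    by apply: M_eq (M_conjV_Delta oj) _; rewrite conjgE ?gnorm.
  apply: N_rdiv_closed Mg Mu _.
  have -> : delta * j * Delta^-1 * u = b ^ delta^-1 by rewrite /u /y conjgE ?gnorm.
  exact: monoid_gen_Div_conjV.
have /eqP : u = 1.
  apply: eq1_mul_delta_leL_Delta Nu _.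
  by rewrite /leL; apply: M_eq (bj : M _) _; rewrite /u /y ?gnorm.
by rewrite /u /y mulg_eq1 invgK => /eqP ->; rewrite ?gnorm.
Qed.

End Parabolic.

Theorem lemma3p5 (G : groupType) (M : G -> Prop) (Delta delta b : G) :
  garside_structure M Delta ->
  parabolic_substructure M Delta delta ->
  monoid_gen (Div M delta) b ->
  let omega := delta^-1 * Delta in
  let b' := Delta^-1 * ((delta * b * delta^-1) * Delta) in
  [/\ is_meetL M b omega 1,
      is_joinL M b omega (b * omega) &
      b * omega = omega * b'].
Proof.
move=> [Mp [Dbal [Mnoeth [_ [Mgen [_ Mlat]]]]]] [dbal Ddelta _] Nb omega b'.
have M_gen x : M x -> monoid_gen (Div M Delta) x by move/Mgen.
have [[m meet] [j join]] := Mlat b omega.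
have m1 := meet_omega Mp Dbal Mnoeth M_gen Mlat dbal Ddelta Nb meet.
have jE := join_omega Mp Dbal Mnoeth M_gen Mlat dbal Ddelta Nb join.
rewrite /omega /b'; split; [by rewrite -m1 | by rewrite -jE | by rewrite ?gnorm].
Qed.
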